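(* Let $k$ be a field, $\mathbf C$ a finite free category (i.e. freely generated by a directed graph), $\mathcal{A}$ a presheaf of $k$-algebras on $\mathbf C$ and $\mathcal{M}$ a presheaf of $\mathcal{A}$-bimodules. Then the spectral sequence $\{E_r^{*,*}\}$ of the Gerstenhaber–Schack double complex, obtained by first taking cohomology in the Hochschild direction, satisfies $E_2^{p,q}=0$ for all $p\geq 2$ and $q\geq 0$.
   Context: Presheaf of $k$-algebras: functor $\mathcal{A}\colon\mathbf C^{\mathrm{op}}\to\mathbf{Alg}_k$ (associative unital finite-dimensional algebras). Presheaf of $\mathcal{A}$-bimodules: functor $\mathcal{M}$ on $\mathbf C^{\mathrm{op}}$ with each $\mathcal{M}(c)$ an $\mathcal{A}(c)$-bimodule and each $\mathcal{M}(d)\to\mathcal{M}(c)$ (for $c\to d$) an $\mathcal{A}(d)$-bimodule map via $\mathcal{A}(d)\to\mathcal{A}(c)$. The Gerstenhaber–Schack double complex: $C^{p,q}(\mathcal{A},\mathcal{M})=\prod_{\sigma}\mathrm{Hom}_k(\mathcal{A}(c_p)^{\otimes q},\mathcal{M}(c_0))$ over strings $\sigma=(c_0\to\cdots\to c_p)$ of composable morphisms, with the Hochschild differential $d_{\mathrm{HH}}$ in $q$ and the simplicial differential $(d_{\mathrm{simp}}\Gamma)^\sigma=T\circ\Gamma^{\partial_0\sigma}+\sum_{r=1}^{p-1}(-1)^r\Gamma^{\partial_r\sigma}+(-1)^p\Gamma^{\partial_p\sigma}\circ\phi^{\otimes q}$ in $p$ ($\partial_r$ deletes $c_r$; $T\colon\mathcal{M}(c_1)\to\mathcal{M}(c_0)$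 and $\phi\colon\mathcal{A}(c_p)\to\mathcal{A}(c_{p-1})$ are the structure maps); its total cohomology is the diagrammatic Hochschild cohomology $\mathrm{HH}^*_{\mathrm{GS}}(\mathcal{A},\mathcal{M})$. *)

From HB Require Import structures.
From mathcomp Require Import all_boot all_order all_algebra.
From mathcomp Require Import falgebra.
Set Implicit Arguments. Unset Strict Implicit. Unset Printing Implicit Defensive.
Import GRing.Theory.
Local Open Scope ring_scope.

(* Finite categories (objects and hom-sets are finite types).
   Composition is written in diagrammatic order: comp f g = g o f.    *)
Record fincat := FinCat {
  Obj :> finType;
  Hom : Obj -> Obj -> finType;
  idm : forall a, Hom a a;
  comp : forall a b c, Hom a b -> Hom b c -> Hom a c;
  comp_id_l : forall a b (f : Hom a b), comp (idm a) f = f;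
  comp_id_r : forall a b (f : Hom a b), comp f (idm b) = f;
  comp_assoc : forall a b c d (f : Hom a b) (g : Hom b c) (h : Hom c d),
      comp f (comp g h) = comp (comp f g) h
}.
Arguments Hom {C} : rename.
Arguments idm {C} : rename.
Arguments comp {C a b c} : rename.

(* Strings  c_0 -f_1-> c_1 -f_2-> ... -f_n-> c_n  of n composable morphisms
   (c_0 = a, c_n = c); identities are allowed (unnormalized nerve). *)
Unset Implicit Arguments.
Inductive str (C : fincat) : nat -> C -> C -> Type :=
| snil (c : C) : str C 0 c c
| scons (n : nat) (a b c : C) (f : Hom a b) (s : str C n b c) : str C n.+1 a c.
Set Implicit Arguments.
Arguments snil {C}.
Arguments scons {C n a b c}.

Fixpoint str_comp (C : fincat) n (a c : C) (s : str C n a c) : Hom a c :=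
  match s in str _ _ a c return Hom a c with
  | snil c => idm c
  | scons _ _ _ _ f t => comp f (str_comp t)
  end.

Definition gen_str (C : fincat) (gen : forall a b : C, pred (Hom a b)) :=
  fix gs n (a c : C) (s : str C n a c) : bool :=
    match s with
    | snil _ => true
    | scons _ _ _ _ f t => gen _ _ f && gs _ _ _ t
    end.

Definition free_cat (C : fincat) : Prop :=
  exists gen : forall a b : C, pred (Hom a b),
    forall (a c : C) (f : Hom a c),
      exists n (s : str C n a c),
        [/\ gen_str gen s, str_comp s = f &
            forall m (t : str C m a c), gen_str gen t -> str_comp t = f ->
              existT (fun m => str C m a c) n s = existT _ m t].

Record psh_alg (k : fieldType) (C : fincat) := PshAlg {
  Aob : C -> falgType k;
  Amor : forall a b : C, Hom a b -> Aob b -> Aob a;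
  Amor_linear : forall a b (f : Hom a b), linear (Amor f);
  Amor_monoid : forall a b (f : Hom a b), monoid_morphism (Amor f);
  Amor_id : forall a x, Amor (idm a) x = x;
  Amor_comp : forall a b c (f : Hom a b) (g : Hom b c) x,
      Amor (comp f g) x = Amor f (Amor g x)
}.
Arguments Aob {k C}.
Arguments Amor {k C} A {a b} : rename.

Record psh_bimod (k : fieldType) (C : fincat) (A : psh_alg k C) := PshBimod {
  Mob : C -> lmodType k;
  lact : forall c, Aob A c -> Mob c -> Mob c;
  ract : forall c, Mob c -> Aob A c -> Mob c;
  lact_linl : forall c (m : Mob c), linear (fun x => lact x m);
  lact_linr : forall c (x : Aob A c), linear (lact x);
  ract_linl : forall c (x : Aob A c), linear (fun m => ract m x);
  ract_linr : forall c (m : Mob c), linear (ract m);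
  lact1 : forall c (m : Mob c), lact 1 m = m;
  ract1 : forall c (m : Mob c), ract m 1 = m;
  lactM : forall c (x y : Aob A c) m, lact (x * y) m = lact x (lact y m);
  ractM : forall c (x y : Aob A c) m, ract m (x * y) = ract (ract m x) y;
  lact_ract : forall c (x y : Aob A c) m, lact x (ract m y) = ract (lact x m) y;
  Mmor : forall a b : C, Hom a b -> Mob b -> Mob a;
  Mmor_linear : forall a b (f : Hom a b), linear (Mmor f);
  Mmor_lact : forall a b (f : Hom a b) x m,
      Mmor f (lact x m) = lact (Amor A f x) (Mmor f m);
  Mmor_ract : forall a b (f : Hom a b) m x,
      Mmor f (ract m x) = ract (Mmor f m) (Amor A f x);
  Mmor_id : forall a m, Mmor (idm a) m = m;
  Mmor_comp : forall a b c (f : Hom a b) (g : Hom b c) m,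
      Mmor (comp f g) m = Mmor f (Mmor g m)
}.
Arguments Mob {k C A}.
Arguments lact {k C A} M {c} : rename.
Arguments ract {k C A} M {c} : rename.
Arguments Mmor {k C A} M {a b} : rename.

Definition str_uncons (C : fincat) n (a c : C) (s : str C n.+1 a c)
  : {b : C & (Hom a b * str C n b c)%type} :=
  match s in str _ m a c
    return (match m with 0 => unit | n.+1 => {b : C & (Hom a b * str C n b c)%type} end)
  with
  | snil _ => tt
  | scons _ _ b _ f t => existT _ b (f, t)
  end.

Definition str0_hom (C : fincat) (a b c : C) (f : Hom a b) (t : str C 0 b c) : Hom a c :=
  match t in str _ m b' c' return (match m with 0 => Hom a b' -> Hom a c' | _ => unit end)
  with
  | snil _ => fun f => f
  | scons _ _ _ _ _ _ => tt
  end f.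

Fixpoint str_unsnoc (C : fincat) n : forall (a c : C), str C n.+1 a c ->
    {b : C & (str C n a b * Hom b c)%type} :=
  match n with
  | 0 => fun a c s =>
      let: existT b (f, t) := str_uncons s in existT _ a (snil a, str0_hom f t)
  | m.+1 => fun a c s =>
      let: existT b (f, t) := str_uncons s in
      let: existT b' (t', g) := str_unsnoc t in
      existT _ b' (scons f t', g)
  end.

(* inner face: compose f_{j+1} and f_{j+2} (0-based j), deleting c_{j+1} *)
Fixpoint str_inner (C : fincat) n (j : nat) : forall (a c : C), str C n.+2 a c -> str C n.+1 a c :=
  match n with
  | 0 => fun a c s =>
      let: existT b (f, t) := str_uncons s in
      let: existT d (g, u) := str_uncons t in scons (comp f g) u
  | m.+1 => fun a c s =>
      let: existT b (f, t) := str_uncons s in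
      match j with
      | 0 => let: existT d (g, u) := str_uncons t in scons (comp f g) u
      | j'.+1 => scons f (str_inner j' t)
      end
  end.

(* A (p,q)-cochain assigns to each string sigma = (c_0 -> ... -> c_p) a map
   A(c_p)^q -> M(c_0); Hom_k(A(c_p)^{(x) q}, M(c_0)) is represented by the
   k-multilinear maps A(c_p)^q -> M(c_0). *)
Section GS.
Variables (k : fieldType) (C : fincat) (A : psh_alg k C) (M : psh_bimod A).

Definition cochain (p q : nat) :=
  forall a c : C, str C p a c -> {ffun 'I_q -> Aob A c} -> Mob M a.

Definition fset_at (T : Type) q (x : {ffun 'I_q -> T}) (i : 'I_q) (y : T) :=
  [ffun j => if j == i then y else x j].

Definition multilin p q (G : cochain p q) : Prop :=
  forall a c (s : str C p a c) (i : 'I_q) (x : {ffun 'I_q -> Aob A c}),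
    linear (fun y => G a c s (fset_at x i y)).

Definition ceq p q (G H : cochain p q) : Prop :=
  forall a c (s : str C p a c) x, G a c s x = H a c s x.

Definition czero p q : cochain p q := fun _ _ _ _ => 0.
Definition csub p q (G H : cochain p q) : cochain p q :=
  fun a c s x => G a c s x - H a c s x.

Definition tl_tuple (T : Type) q (x : {ffun 'I_q.+1 -> T}) : {ffun 'I_q -> T} :=
  [ffun j => x (lift ord0 j)].
Definition init_tuple (T : Type) q (x : {ffun 'I_q.+1 -> T}) : {ffun 'I_q -> T} :=
  [ffun j => x (widen_ord (leqnSn q) j)].
Definition merge_tuple (R : nzRingType) q (i : 'I_q) (x : {ffun 'I_q.+1 -> R})
  : {ffun 'I_q -> R} :=
  [ffun j : 'I_q => if (j < i)%N then x (widen_ord (leqnSn q) j)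
                    else if j == i then x (widen_ord (leqnSn q) i) * x (lift ord0 i)
                    else x (lift ord0 j)].

(* Hochschild differential; M(c_0) is an A(c_p)-bimodule through the
   structure map of the composite c_0 -> c_p of sigma. *)
Definition dHH p q (G : cochain p q) : cochain p q.+1 :=
  fun a c s x =>
    let phi := Amor A (str_comp s) in
    lact M (phi (x ord0)) (G a c s (tl_tuple x))
    + \sum_(i < q) (-1) ^+ i.+1 *: G a c s (merge_tuple i x)
    + (-1) ^+ q.+1 *: ract M (G a c s (init_tuple x)) (phi (x ord_max)).

Definition dsimp_inner p q : cochain p q -> cochain p.+1 q :=
  match p with
  | 0 => fun _ _ _ _ _ => 0
  | n.+1 => fun G a c s x => \sum_(j < n.+1) (-1) ^+ j.+1 *: G a c (str_inner j s) x
  end.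

Definition dsimp p q (G : cochain p q) : cochain p.+1 q :=
  fun a c s x =>
    (let: existT b (f, t) := str_uncons s in Mmor M f (G b c t x))
    + dsimp_inner G s x
    + (-1) ^+ p.+1 *:
        (let: existT b (t, g) := str_unsnoc s in
         G a b t [ffun i => Amor A g (x i)]).

Definition HH_closed p q (G : cochain p q) : Prop := ceq (dHH G) (@czero p q.+1).

(* G (an HH-cocycle) represents 0 in E_1^{p,q} = H^q(C^{p,*}, d_HH) *)
Definition E1_zero p q : cochain p q -> Prop :=
  match q with
  | 0 => fun G => ceq G (@czero p 0)
  | q'.+1 => fun G => exists H : cochain p q', multilin H /\ ceq (dHH H) G
  end.

(* E_2^{p,q} = H^p(E_1^{*,q}, d_simp) = 0 *)
Definition E2_exact p q : cochain p q -> Prop :=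
  match p with
  | 0 => fun G => E1_zero G
  | p'.+1 => fun G => exists L : cochain p' q,
       [/\ multilin L, HH_closed L & E1_zero (csub G (dsimp L))]
  end.

Definition E2_zero p q : Prop :=
  forall G : cochain p q, multilin G -> HH_closed G ->
    E1_zero (dsimp G) -> E2_exact G.

End GS.

(* A free category has the homotopy type of its generating graph, and the
   following operator realises this on cochains.  Write the last arrow f of a
   string c_0 -> ... -> c_(p-1) -f-> c_p as its unique word g_1 ... g_m in the
   generators, and let h send a (p+1)-cochain G to the p-cochain

     +- ( sum_i G(c_0 -> ... -> c_(p-1) -(g_1...g_(i-1))-> . -g_i-> .)
          - G(c_0 -> ... -f-> c_p -id-> c_p) ),

   the i-th term evaluated on the arguments pulled back along g_(i+1)...g_m.
   Since the word of a composite is the concatenation of the words, the faces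
   of d_simp telescope along these words and G = d_simp (h G) + h (d_simp G)
   for every p-cochain G with p >= 2.  The operator h is built from structure
   maps of A only, so it commutes with d_HH and preserves multilinearity;
   hence it is also a contracting homotopy of the E_1 page in simplicial
   degrees >= 2. *)

From Pilot Require Import Defs.
From HB Require Import structures.
From mathcomp Require Import all_boot all_order all_algebra falgebra.
From Stdlib Require Import ClassicalEpsilon.
Set Implicit Arguments. Unset Strict Implicit. Unset Printing Implicit Defensive.
Import GRing.Theory.
Local Open Scope ring_scope.

(* Otherwise [Hom] and [comp] would be mathcomp's [vector.Hom] and [ssrfun.comp]. *)
Local Notation Hom := Defs.Hom.
Local Notation comp := Defs.comp.

Arguments str_inner : simpl never.

Section Strings.
Variable C : fincat.

Fixpoint str_rcons n (a b : C) (s : str C n a b) : forall c, Hom b c -> str C n.+1 a c :=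
  match s in str _ n a b return forall c, Hom b c -> str C n.+1 a c with
  | snil b => fun c f => scons f (snil c)
  | scons _ _ _ _ g t => fun c f => scons g (str_rcons t f)
  end.

Fixpoint str_cat n m (a b c : C) (s : str C n a b) : str C m b c -> str C (n + m) a c :=
  match s in str _ n a b return str C m b c -> str C (n + m) a c with
  | snil b => fun t => t
  | scons _ _ _ _ g s' => fun t => scons g (str_cat s' t)
  end.

Lemma str_consP n (a c : C) (s : str C n.+1 a c) :
  exists b (f : Hom a b) (t : str C n b c), s = scons f t.
Proof.
suff : forall m (s : str C m a c), (match m return str C m a c -> Prop with
    | n.+1 => fun s => exists b (f : Hom a b) (t : str C n b c), s = scons f t
    | 0 => fun _ => True end) s.
  by move/(_ n.+1 s).
by move=> m {}s; case: s => //= n' a' b' c' f t; exists b', f, t.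
Qed.

Lemma str0_ind (P : forall a c : C, str C 0 a c -> Prop) :
  (forall c, P c c (snil c)) -> forall a c s, P a c s.
Proof.
move=> Psnil a c s.
suff : forall m (s : str C m a c),
    (match m return str C m a c -> Prop with 0 => P a c | _ => fun _ => True end) s.
  by move/(_ 0 s).
by move=> m {}s; case: s.
Qed.

Lemma str_unsnoc_rcons n (a b c : C) (s : str C n a b) (f : Hom b c) :
  str_unsnoc (str_rcons s f) = existT _ b (s, f).
Proof. by elim: s c f => //= n' a' b' c' g t IH c f; rewrite IH. Qed.

Lemma str_rconsP n (a c : C) (s : str C n.+1 a c) :
  exists b (t : str C n a b) (f : Hom b c), s = str_rcons t f.
Proof.
elim: n a s => [|n IH] a s; have [b [f [t ->]]] := str_consP s.
  by move: b c t f {s}; apply: str0_ind => c f; exists a, (snil a), f.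
have [b' [t' [g ->]]] := IH _ t.
by exists b', (scons f t'), g.
Qed.

Lemma str_uncons_rcons n (a b c : C) (s : str C n.+1 a b) (f : Hom b c) :
  str_uncons (str_rcons s f)
  = let: existT d (g, t) := str_uncons s in existT _ d (g, str_rcons t f).
Proof. by have [d [g [t ->]]] := str_consP s. Qed.

Lemma str_comp_rcons n (a b c : C) (s : str C n a b) (f : Hom b c) :
  str_comp (str_rcons s f) = comp (str_comp s) f.
Proof.
elim: s c f => [b' c f | n' a' b' c' g t IH c f] /=; last by rewrite IH comp_assoc.
by rewrite comp_id_r comp_id_l.
Qed.

Lemma str_comp_cat n m (a b c : C) (s : str C n a b) (t : str C m b c) :
  str_comp (str_cat s t) = comp (str_comp s) (str_comp t).
Proof.
elim: s t => [b' t | n' a' b' c' g s IH t] /=; last by rewrite IH comp_assoc.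
by rewrite comp_id_l.
Qed.

Lemma gen_str_cat (gen : forall a b : C, pred (Hom a b)) n m (a b c : C)
    (s : str C n a b) (t : str C m b c) :
  gen_str gen (str_cat s t) = gen_str gen s && gen_str gen t.
Proof. by elim: s t => //= n' a' b' c' g s' IH t; rewrite IH andbA. Qed.

Lemma str_inner_consS n j (a b c : C) (f : Hom a b) (t : str C n.+2 b c) :
  str_inner j.+1 (scons f t) = scons f (str_inner j t).
Proof. by []. Qed.

Lemma str_inner_rcons n j (a b c : C) (s : str C n.+2 a b) (f : Hom b c) :
  (j <= n)%N -> str_inner j (str_rcons s f) = str_rcons (str_inner j s) f.
Proof.
elim: n j a s => [|n IH] j a s le_jn; have [b1 [f1 [t ->]]] := str_consP s.
  by have [b2 [f2 [u ->]]] := str_consP t; case: j le_jn.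
case: j le_jn => [|j] le_jn; first by have [b2 [f2 [u ->]]] := str_consP t.
by rewrite /= str_inner_consS IH.
Qed.

(* Existential because [str_inner j s] is ill-typed when [n = 0]. *)
Lemma str_inner_rcons_ex n (j : 'I_n) (a b : C) (s : str C n.+1 a b) :
  exists s' : str C n a b, forall c (h : Hom b c), str_inner j (str_rcons s h) = str_rcons s' h.
Proof.
case: n j s => [[] // | n] j s; exists (str_inner j s) => c h.
by rewrite str_inner_rcons // -ltnS.
Qed.

Lemma str_inner_last n (a b d c : C) (t : str C n a b) (g : Hom b d) (f : Hom d c) :
  str_inner n (str_rcons (str_rcons t g) f) = str_rcons t (comp g f).
Proof.
elim: t d g c f => //= -[|n'] a' b' c' h t IH d g c f.
  by move: b' c' t IH h g; apply: str0_ind.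
by rewrite -IH.
Qed.

End Strings.

Lemma free_cat_gword (C : fincat) : free_cat C ->
  exists gword : forall a c : C, Hom a c -> {n : nat & str C n a c},
    (forall a b c (f : Hom a b) (g : Hom b c),
       gword a c (comp f g)
       = existT _ _ (str_cat (projT2 (gword a b f)) (projT2 (gword b c g)))) /\
    (forall a c (f : Hom a c), str_comp (projT2 (gword a c f)) = f).
Proof.
move=> [gen free_gen].
have gword_ex a c (f : Hom a c) : exists w : {n : nat & str C n a c},
    [/\ gen_str gen (projT2 w), str_comp (projT2 w) = f &
        forall m (t : str C m a c), gen_str gen t -> str_comp t = f -> w = existT _ m t].
  by have [n [s [gen_s comp_s uniq_s]]] := free_gen a c f; exists (existT _ n s).
pose gword a c f := proj1_sig (constructive_indefinite_description _ (gword_ex a c f)).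
have gwordP a c f := proj2_sig (constructive_indefinite_description _ (gword_ex a c f)).
exists gword; split => [a b c f g | a c f]; last by case: (gwordP a c f).
have [_ _ uniq_fg] := gwordP a c (comp f g).
have [gen_f comp_f _] := gwordP a b f; have [gen_g comp_g _] := gwordP b c g.
by apply: uniq_fg; rewrite ?gen_str_cat ?gen_f ?str_comp_cat ?comp_f ?comp_g.
Qed.

Lemma subrACA3 (V : zmodType) (a1 a2 a3 b1 b2 b3 : V) :
  a1 + a2 + a3 - (b1 + b2 + b3) = a1 - b1 + (a2 - b2) + (a3 - b3).
Proof. by rewrite opprD addrACA opprD [X in X + _]addrACA. Qed.

Lemma subrACA (V : zmodType) (x y z t : V) : x - y - (z - t) = x - z - (y - t).
Proof. by rewrite opprD addrACA -opprD. Qed.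

HB.instance Definition _ (k : fieldType) (C : fincat) (A : psh_alg k C)
    (M : psh_bimod A) (a b : C) (f : Hom a b) :=
  GRing.isLinear.Build k (Mob M b) (Mob M a) *:%R (Mmor M f) (@Mmor_linear _ _ _ M _ _ f).
HB.instance Definition _ (k : fieldType) (C : fincat) (A : psh_alg k C)
    (M : psh_bimod A) (c : C) (x : Aob A c) :=
  GRing.isLinear.Build k (Mob M c) (Mob M c) *:%R (lact M x) (@lact_linr _ _ _ M _ x).

Section Bimodule.
Variables (k : fieldType) (C : fincat) (A : psh_alg k C) (M : psh_bimod A) (c : C).
Implicit Types (m : Mob M c) (y : Aob A c).

Lemma ractD m1 m2 y : ract M (m1 + m2) y = ract M m1 y + ract M m2 y.
Proof. by rewrite -[m1]scale1r ract_linl !scale1r. Qed.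

Lemma ract0 y : ract M 0 y = 0.
Proof. by apply/(addrI (ract M 0 y)); rewrite -ractD !addr0. Qed.

Lemma ractZ e m y : ract M (e *: m) y = e *: ract M m y.
Proof. by rewrite -[e *: m]addr0 ract_linl ract0 addr0. Qed.
End Bimodule.

Section Cochains.
Variables (k : fieldType) (C : fincat) (A : psh_alg k C) (M : psh_bimod A).
Local Notation tup q c := {ffun 'I_q -> Aob A c}.

Definition tpull q (z c : C) (v : Hom z c) (x : tup q c) : tup q z :=
  [ffun i => Amor A v (x i)].

Lemma fold_tpull q (z c : C) (v : Hom z c) (x : tup q c) :
  [ffun i => Amor A v (x i)] = tpull v x.
Proof. by []. Qed.

Lemma tpull_id q (c : C) (x : tup q c) : tpull (idm c) x = x.
Proof. by apply/ffunP => i; rewrite ffunE Amor_id. Qed.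

Lemma tpull_comp q (y z c : C) (f : Hom y z) (g : Hom z c) (x : tup q c) :
  tpull (comp f g) x = tpull f (tpull g x).
Proof. by apply/ffunP => i; rewrite !ffunE Amor_comp. Qed.

Lemma tl_tpull q (z c : C) (v : Hom z c) (x : tup q.+1 c) :
  tl_tuple (tpull v x) = tpull v (tl_tuple x).
Proof. by apply/ffunP => i; rewrite !ffunE. Qed.

Lemma init_tpull q (z c : C) (v : Hom z c) (x : tup q.+1 c) :
  init_tuple (tpull v x) = tpull v (init_tuple x).
Proof. by apply/ffunP => i; rewrite !ffunE. Qed.

Lemma merge_tpull q (z c : C) (v : Hom z c) (x : tup q.+1 c) i :
  merge_tuple i (tpull v x) = tpull v (merge_tuple i x).
Proof.
apply/ffunP => j; rewrite !ffunE.
by do 2 case: ifP => // _; rewrite (Amor_monoid A v).2.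
Qed.

Lemma fset_tpull q (z c : C) (v : Hom z c) (x : tup q c) i y :
  tpull v (fset_at x i y) = fset_at (tpull v x) i (Amor A v y).
Proof. by apply/ffunP => j; rewrite !ffunE; case: ifP. Qed.

(* For t = (g_1, ..., g_m) and a prefix u : b -> y, word_sum F t u x is
   the sum over i of F (u g_1 ... g_(i-1)) g_i (x pulled back along
   g_(i+1) ... g_m). *)
Section WordSum.
Variables (V : lmodType k) (q : nat) (b : C).
Local Notation Fam := (forall y z : C, Hom b y -> Hom y z -> tup q z -> V).

Fixpoint word_sum (F : Fam) m (y c : C) (t : str C m y c) : Hom b y -> tup q c -> V :=
  match t in str _ m y c return Hom b y -> tup q c -> V with
  | snil _ => fun _ _ => 0
  | scons _ y z c g t' => fun u x =>
      F y z u g (tpull (str_comp t') x) + word_sum F t' (comp u g) x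
  end.

Implicit Types F : Fam.

Lemma eq_word_sum F F' m y c (t : str C m y c) u x :
  (forall y z u g w, F y z u g w = F' y z u g w) -> word_sum F t u x = word_sum F' t u x.
Proof. by move=> eqF; elim: t u x => //= n y' z c' g t IH u x; rewrite eqF IH. Qed.

Lemma word_sum0 m y c (t : str C m y c) u x :
  word_sum (fun _ _ _ _ _ => 0) t u x = 0.
Proof. by elim: t u x => //= n y' z c' g t IH u x; rewrite IH addr0. Qed.

Lemma word_sumD F1 F2 m y c (t : str C m y c) u x :
  word_sum (fun y z u g w => F1 y z u g w + F2 y z u g w) t u x
  = word_sum F1 t u x + word_sum F2 t u x.
Proof. by elim: t u x => /= [*|n y' z c' g t IH u x]; rewrite ?addr0 // IH addrACA. Qed.

Lemma word_sumZ e F m y c (t : str C m y c) u x :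
  word_sum (fun y z u g w => e *: F y z u g w) t u x = e *: word_sum F t u x.
Proof. by elim: t u x => /= [*|n y' z c' g t IH u x]; rewrite ?scaler0 // IH scalerDr. Qed.

Lemma word_sum_sum n (F : 'I_n -> Fam) m y c (t : str C m y c) u x :
  word_sum (fun y z u g w => \sum_(j < n) F j y z u g w) t u x
  = \sum_(j < n) word_sum (F j) t u x.
Proof.
elim: t u x => /= [*|n' y' z c' g t IH u x]; first by rewrite big1.
by rewrite IH big_split.
Qed.

Lemma word_sum_cat F n1 n2 y d c (t1 : str C n1 y d) (t2 : str C n2 d c) u x :
  word_sum F (str_cat t1 t2) u x
  = word_sum F t1 u (tpull (str_comp t2) x) + word_sum F t2 (comp u (str_comp t1)) x.
Proof.
elim: t1 t2 u x => /= [d' t2 u x|n y' z c' g t IH t2 u x].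
  by rewrite add0r comp_id_r.
by rewrite IH str_comp_cat tpull_comp addrA comp_assoc.
Qed.

Lemma word_sum_telescope (K : forall z : C, Hom b z -> tup q z -> V)
    m y c (t : str C m y c) u x :
  word_sum (fun y z u g w => K z (comp u g) w - K y u (tpull g w)) t u x
  = K c (comp u (str_comp t)) x - K y u (tpull (str_comp t) x).
Proof.
elim: t u x => /= [c' u x|n y' z c' g t IH u x]; first by rewrite comp_id_r tpull_id subrr.
by rewrite IH -tpull_comp comp_assoc addrC addrA subrK.
Qed.

End WordSum.

Lemma word_sum_linear (V W : lmodType k) (L : {linear V -> W}) q (b : C)
    (F : forall y z : C, Hom b y -> Hom y z -> tup q z -> V) m y c (t : str C m y c) u x :
  word_sum (fun y z u g w => L (F y z u g w)) t u x = L (word_sum F t u x).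
Proof. by elim: t u x => /= [*|n y' z c' g t IH u x]; rewrite ?raddf0 // IH raddfD. Qed.

Lemma word_sum_prefix (V : lmodType k) q (b b' : C) (a0 : Hom b b')
    (F : forall y z : C, Hom b y -> Hom y z -> tup q z -> V) m y c (t : str C m y c) u x :
  word_sum (fun y z u g w => F y z (comp a0 u) g w) t u x = word_sum F t (comp a0 u) x.
Proof. by elim: t u x => //= n y' z c' g t IH u x; rewrite IH comp_assoc. Qed.

Lemma word_sum_multilin (V : lmodType k) q (b : C)
    (F : forall y z : C, Hom b y -> Hom y z -> tup q z -> V)
    m y c (t : str C m y c) (u : Hom b y) (x : tup q c) i :
  (forall y z u g w, linear (fun v => F y z u g (fset_at w i v))) ->
  linear (fun v => word_sum F t u (fset_at x i v)).
Proof.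
move=> F_lin; elim: t u x => [c' u x | n y' z c' g t IH u x] e v1 v2 /=.
  by rewrite scaler0 addr0.
rewrite IH !fset_tpull Amor_linear F_lin.
by rewrite scalerDr addrACA.
Qed.

Definition hoch q (a c : C) (phi : Aob A c -> Aob A a) (F : tup q c -> Mob M a)
    (x : tup q.+1 c) : Mob M a :=
  lact M (phi (x ord0)) (F (tl_tuple x))
  + \sum_(i < q) (-1) ^+ i.+1 *: F (merge_tuple i x)
  + (-1) ^+ q.+1 *: ract M (F (init_tuple x)) (phi (x ord_max)).

Lemma dHHE p q (G : cochain M p q) a c (s : str C p a c) x :
  dHH G s x = hoch (Amor A (str_comp s)) (G a c s) x.
Proof. by []. Qed.

Section Hochschild.
Variables (q : nat) (a c : C) (phi : Aob A c -> Aob A a).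
Implicit Types F : tup q c -> Mob M a.

Lemma eq_hoch F F' x : F =1 F' -> hoch phi F x = hoch phi F' x.
Proof. by move=> eqF; rewrite /hoch !eqF; under eq_bigr do rewrite eqF. Qed.

Lemma hoch0 x : hoch phi (fun _ : tup q c => 0) x = 0.
Proof. by rewrite /hoch raddf0 ract0 scaler0 big1 ?addr0 // => i _; rewrite scaler0. Qed.

Lemma hochD F1 F2 x :
  hoch phi (fun w => F1 w + F2 w) x = hoch phi F1 x + hoch phi F2 x.
Proof.
rewrite /hoch raddfD ractD scalerDr; under eq_bigr do rewrite scalerDr.
by rewrite big_split /= [RHS]addrACA; congr (_ + _); apply: addrACA.
Qed.

Lemma hochZ e F x : hoch phi (fun w => e *: F w) x = e *: hoch phi F x.
Proof.
rewrite /hoch linearZ ractZ /= !scalerDr scaler_sumr !scalerA (mulrC e).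
by congr (_ + _ + _); apply: eq_bigr => i _; rewrite !scalerA mulrC.
Qed.

Lemma hochB F1 F2 x :
  hoch phi (fun w => F1 w - F2 w) x = hoch phi F1 x - hoch phi F2 x.
Proof.
rewrite hochD -scaleN1r -hochZ.
by congr (_ + _); apply: eq_hoch => w; rewrite scaleN1r.
Qed.

End Hochschild.

Lemma hoch_tpull q (a z c : C) (phi : Aob A c -> Aob A a) (phi' : Aob A z -> Aob A a)
    (v : Hom z c) (F : tup q z -> Mob M a) x :
  phi =1 phi' \o Amor A v ->
  hoch phi (fun w => F (tpull v w)) x = hoch phi' F (tpull v x).
Proof.
move=> eq_phi; rewrite /hoch !eq_phi tl_tpull init_tpull !ffunE.
by congr (_ + _ + _); apply: eq_bigr => i _; rewrite merge_tpull.
Qed.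

Lemma hoch_word_sum q n (G : cochain M n.+2 q) a b (tau : str C n a b)
    m y c (t : str C m y c) (u : Hom b y) (phi : Aob A c -> Aob A a) x :
  phi =1 Amor A (comp (str_comp tau) (comp u (str_comp t))) ->
  hoch phi (fun w => word_sum (fun y z u g =>
                       G a z (str_rcons (str_rcons tau u) g)) t u w) x
  = word_sum (fun y z u g => dHH G (str_rcons (str_rcons tau u) g)) t u x.
Proof.
elim: t u phi x => [c' u phi x _ | n' y' z c' g t IH u phi x eq_phi] /=.
  exact: hoch0.
rewrite hochD (IH _ phi); last by move=> w; rewrite eq_phi !comp_assoc.
congr (_ + _); apply: hoch_tpull => w /=.
by rewrite eq_phi !str_comp_rcons -Amor_comp !comp_assoc.
Qed.

Lemma dsimpZB p q e (G1 G2 : cochain M p q) a c (s : str C p.+1 a c) x :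
  dsimp (fun a c s x => e *: (G1 a c s x - G2 a c s x)) s x
  = e *: (dsimp G1 s x - dsimp G2 s x).
Proof.
have innerZB : dsimp_inner (fun a c s x => e *: (G1 a c s x - G2 a c s x)) s x
               = e *: (dsimp_inner G1 s x - dsimp_inner G2 s x).
  case: p G1 G2 s => [|n] G1 G2 s /=; first by rewrite subrr scaler0.
  rewrite -sumrB scaler_sumr; apply: eq_bigr => j _.
  by rewrite -scalerBr !scalerA mulrC.
rewrite /dsimp innerZB; case: (str_uncons s) => b [f t]; case: (str_unsnoc s) => b' [t' g].
rewrite linearZ linearB /= (scalerA _ e) mulrC -scalerA -!scalerDr; congr (e *: _).
by rewrite subrACA3 scalerBr.
Qed.

Section Contraction.
Variable gword : forall a c : C, Hom a c -> {n : nat & str C n a c}.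
Hypothesis gword_comp : forall a b c (f : Hom a b) (g : Hom b c),
  gword (comp f g) = existT _ _ (str_cat (projT2 (gword f)) (projT2 (gword g))).
Hypothesis str_comp_gword : forall a c (f : Hom a c), str_comp (projT2 (gword f)) = f.

Definition split_last q n (G : cochain M n.+2 q) : cochain M n.+1 q :=
  fun a c s x => let: existT b (tau, f) := str_unsnoc s in
    word_sum (fun y z (u : Hom b y) (g : Hom y z) w => G a z (str_rcons (str_rcons tau u) g) w)
      (projT2 (gword f)) (idm b) x.

Definition degen_last q n (G : cochain M n.+1 q) : cochain M n q :=
  fun a c s x => G a c (str_rcons s (idm c)) x.

(* The sign makes [dsimp_htpy] hold uniformly in [n]. *)
Definition htpy q n (G : cochain M n.+2 q) : cochain M n.+1 q :=
  fun a c s x => (-1) ^+ n.+1 *: (split_last G s x - degen_last G s x).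

Lemma split_last_rcons q n (G : cochain M n.+2 q) a b c (tau : str C n a b) (f : Hom b c) x :
  split_last G (str_rcons tau f) x =
  word_sum (fun y z (u : Hom b y) (g : Hom y z) w => G a z (str_rcons (str_rcons tau u) g) w)
    (projT2 (gword f)) (idm b) x.
Proof. by rewrite /split_last str_unsnoc_rcons. Qed.

Lemma split_last_comp q n (G : cochain M n.+2 q) a b0 b1 c (tau : str C n a b0)
    (f : Hom b0 b1) (g : Hom b1 c) x :
  split_last G (str_rcons tau (comp f g)) x =
  split_last G (str_rcons tau f) (tpull g x) +
  word_sum (fun y z (u : Hom b1 y) (h : Hom y z) w =>
              G a z (str_rcons (str_rcons tau (comp f u)) h) w)
    (projT2 (gword g)) (idm b1) x.
Proof.
rewrite !split_last_rcons gword_comp word_sum_cat !str_comp_gword comp_id_l.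
by rewrite (word_sum_prefix f (fun y z u h => G a z (str_rcons (str_rcons tau u) h))) comp_id_r.
Qed.

Section Congruence.
Variables (q n : nat) (G G' : cochain M n.+2 q).

Lemma eq_split_last : ceq G G' -> ceq (split_last G) (split_last G').
Proof.
move=> eqG a c s x; have [b [tau [f ->]]] := str_rconsP s.
by rewrite !split_last_rcons; apply: eq_word_sum => *; rewrite eqG.
Qed.

Lemma eq_htpy : ceq G G' -> ceq (htpy G) (htpy G').
Proof. by move=> eqG a c s x; rewrite /htpy /degen_last eq_split_last // eqG. Qed.

End Congruence.

Lemma htpy_czero q n : ceq (htpy (@czero _ _ _ M n.+2 q)) (@czero _ _ _ M n.+1 q).
Proof.
move=> a c s x; have [b [tau [f ->]]] := str_rconsP s.
by rewrite /htpy split_last_rcons word_sum0 subrr scaler0.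
Qed.

Lemma htpy_multilin q n (G : cochain M n.+2 q) : multilin G -> multilin (htpy G).
Proof.
move=> G_lin a c s i x e v1 v2; have [b [tau [f ->]]] := str_rconsP s.
rewrite /htpy /degen_last !split_last_rcons !word_sum_multilin // G_lin.
by rewrite opprD addrACA -scalerBr scalerDr !scalerA (mulrC e).
Qed.

Lemma dHH_split_last q n (G : cochain M n.+2 q) :
  ceq (dHH (split_last G)) (split_last (dHH G)).
Proof.
move=> a c s x; have [b [tau [f ->]]] := str_rconsP s.
rewrite dHHE split_last_rcons; under eq_hoch do rewrite split_last_rcons.
by apply: hoch_word_sum => w; rewrite str_comp_rcons comp_id_l str_comp_gword.
Qed.

Lemma dHH_degen_last q n (G : cochain M n.+1 q) :
  ceq (dHH (degen_last G)) (degen_last (dHH G)).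
Proof. by move=> a c s x; rewrite /degen_last !dHHE str_comp_rcons comp_id_r. Qed.

Lemma dHH_htpy q n (G : cochain M n.+2 q) : ceq (dHH (htpy G)) (htpy (dHH G)).
Proof.
move=> a c s x; rewrite dHHE /htpy hochZ hochB -!dHHE.
by rewrite dHH_split_last dHH_degen_last.
Qed.

Lemma dsimp_degen_last q n (G : cochain M n.+2 q) a b c (s : str C n.+1 a b)
    (f : Hom b c) x :
  degen_last (dsimp G) (str_rcons s f) x
  = dsimp (degen_last G) (str_rcons s f) x
    - (-1) ^+ n.+2 *: G a b (str_rcons s (idm b)) (tpull f x).
Proof.
rewrite /degen_last /dsimp str_uncons_rcons !str_unsnoc_rcons.
case: (str_uncons (str_rcons s f)) => b1 [f1 t] /=.
rewrite !fold_tpull tpull_id addrK big_ord_recr /= str_inner_last comp_id_r.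
rewrite (exprS _ n.+2) mulN1r scaleNr -addrA addrK; congr (_ + _).
by apply: eq_bigr => j _; rewrite str_inner_rcons // -ltnS.
Qed.

(* Both sides of [dsimp_split_last], expanded face by face: the faces away from
   the last two arrows agree, the face composing f with g yields [W] through
   [split_last_comp], and the last two faces of [dsimp G] telescope along the
   word of g. *)
Section LastTwoArrows.
Variables (q n : nat) (G : cochain M n.+2 q) (a b0 b1 c a1 : C).
Variables (tau : str C n a b0) (f : Hom b0 b1) (g : Hom b1 c) (f1 : Hom a a1) (t : str C n a1 b1).
Hypothesis uncons_tau_f : str_uncons (str_rcons tau f) = existT _ a1 (f1, t).
Let s := str_rcons (str_rcons tau f) g.
Let W (x : tup q c) := word_sum (fun y z (u : Hom b1 y) (h : Hom y z) =>
           G (str_rcons (str_rcons tau (comp f u)) h)) (projT2 (gword g)) (idm b1) x.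

Lemma dsimp_split_last_rcons2 x :
  dsimp (split_last G) s x
  = Mmor M f1 (split_last G (str_rcons t g) x)
    + \sum_(j < n) (-1) ^+ j.+1 *: split_last G (str_inner j s) x
    + (-1) ^+ n.+1 *: W x.
Proof.
rewrite /dsimp str_uncons_rcons uncons_tau_f str_unsnoc_rcons /= big_ord_recr /=.
rewrite str_inner_last split_last_comp /W (exprS _ n.+1) mulN1r scaleNr scalerDr.
by rewrite fold_tpull (addrC (_ *: split_last _ (str_rcons tau f) _)) !addrA addrK.
Qed.

Lemma split_last_dsimp_rcons2 x :
  split_last (dsimp G) s x
  = Mmor M f1 (split_last G (str_rcons t g) x)
    + \sum_(j < n) (-1) ^+ j.+1 *: split_last G (str_inner j s) x
    + (-1) ^+ n.+1 *: W x
    + (-1) ^+ n.+2 *: (G s x - G (str_rcons (str_rcons tau f) (idm b1)) (tpull g x)).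
Proof.
have expand y z (u : Hom b1 y) (h : Hom y z) w :
  dsimp G (str_rcons (str_rcons (str_rcons tau f) u) h) w
  = Mmor M f1 (G (str_rcons (str_rcons t u) h) w)
    + \sum_(j < n) (-1) ^+ j.+1 *:
        G (str_inner j (str_rcons (str_rcons (str_rcons tau f) u) h)) w
    + (-1) ^+ n.+1 *: G (str_rcons (str_rcons tau (comp f u)) h) w
    + (-1) ^+ n.+2 *: (G (str_rcons (str_rcons tau f) (comp u h)) w
                       - G (str_rcons (str_rcons tau f) u) (tpull h w)).
  rewrite /dsimp !str_uncons_rcons uncons_tau_f str_unsnoc_rcons /= !big_ord_recr /=.
  rewrite str_inner_last str_inner_rcons // str_inner_last fold_tpull.
  by rewrite scalerBr (exprS _ n.+2) mulN1r scaleNr !addrA.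
rewrite /s split_last_rcons; under eq_word_sum do rewrite expand.
rewrite !word_sumD word_sum_linear word_sum_sum !word_sumZ -split_last_rcons.
rewrite (word_sum_telescope (fun z v => G (str_rcons (str_rcons tau f) v))).
rewrite str_comp_gword comp_id_l.
congr (_ + _ + _ + _); apply: eq_bigr => j _; rewrite word_sumZ; congr (_ *: _).
have [s' inner_s'] := str_inner_rcons_ex j (str_rcons tau f).
rewrite inner_s' split_last_rcons; apply: eq_word_sum => y z u h w.
by rewrite str_inner_rcons ?inner_s' // ltnW.
Qed.

End LastTwoArrows.

Lemma dsimp_split_last q n (G : cochain M n.+2 q) a b0 b1 c (tau : str C n a b0)
    (f : Hom b0 b1) (g : Hom b1 c) x :
  dsimp (split_last G) (str_rcons (str_rcons tau f) g) x
  - split_last (dsimp G) (str_rcons (str_rcons tau f) g) x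
  = (-1) ^+ n.+1 *: (G a c (str_rcons (str_rcons tau f) g) x
                     - G a b1 (str_rcons (str_rcons tau f) (idm b1)) (tpull g x)).
Proof.
case E: (str_uncons (str_rcons tau f)) => [a1 [f1 t]].
rewrite (dsimp_split_last_rcons2 G g E) (split_last_dsimp_rcons2 G g E).
by rewrite (exprS _ n.+1) mulN1r scaleNr opprD addrA subrr add0r opprK.
Qed.

Lemma dsimp_htpy q n (G : cochain M n.+2 q) : ceq (csub G (dsimp (htpy G))) (htpy (dsimp G)).
Proof.
move=> a c s x; have [b1 [s' [g ->]]] := str_rconsP s; have [b0 [tau [f ->]]] := str_rconsP s'.
set S := str_rcons (str_rcons tau f) g.
pose e : k := (-1) ^+ n.+1.
have e2 : e * e = 1 by rewrite -expr2 sqrr_sign.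
have contract : dsimp (split_last G) S x - dsimp (degen_last G) S x
    = e *: G a c S x + (split_last (dsimp G) S x - degen_last (dsimp G) S x).
  apply/eqP; rewrite -subr_eq subrACA dsimp_split_last dsimp_degen_last subKr.
  by rewrite (exprS _ n.+1) mulN1r scaleNr opprK -/e scalerBr subrK.
rewrite /csub /htpy dsimpZB contract (exprS _ n.+1) mulN1r -/e scalerDr scalerA e2 scale1r.
by rewrite opprD addrA subrr add0r scaleNr.
Qed.

End Contraction.

End Cochains.

Theorem corollary3p14 (k : fieldType) (C : fincat) (HC : free_cat C)
  (A : psh_alg k C) (M : psh_bimod A) (p q : nat) :
  (2 <= p)%N -> E2_zero M p q.
Proof.
case: p => [|[|n]] // _ G G_lin G_closed dG_exact.
have [gword [gword_comp str_comp_gword]] := free_cat_gword HC.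
have htpy_G := dsimp_htpy gword_comp str_comp_gword G.
exists (htpy gword G); split.
- exact: htpy_multilin.
- by move=> a c s x; rewrite (dHH_htpy str_comp_gword) (eq_htpy _ G_closed) htpy_czero.
case: q G G_lin G_closed dG_exact htpy_G => [|q] G _ _ dG_exact htpy_G /=.
  by move=> a c s x; rewrite htpy_G (eq_htpy _ dG_exact) htpy_czero.
have [H [H_lin dH_eq]] := dG_exact.
exists (htpy gword H); split; first exact: htpy_multilin.
by move=> a c s x; rewrite htpy_G (dHH_htpy str_comp_gword) (eq_htpy _ dH_eq).
Qed.
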